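(* No infinite betweenness algebra is a MIA; that is, if $\langle A,f,g\rangle$ is a betweenness algebra with $A$ infinite, then $Q_f\neq S_g$.
   Context: A PS-algebra is $\langle A,f,g\rangle$ where $A$ is a Boolean algebra with at least two elements (operations $+,\cdot,-,0,1$) and $f,g\colon A^2\to A$ satisfy: $f(x,y)=0$ whenever $x=0$ or $y=0$; $f$ is additive in each argument; $g(x,y)=1$ whenever $x=0$ or $y=0$; $g$ is co-additive in each argument ($g(x+x',y)=g(x,y)\cdot g(x',y)$, $g(x,y+y')=g(x,y)\cdot g(x,y')$). A betweenness algebra is a PS-algebra satisfying for all $x,y,z$: (ABT0) $x\leq f(x,x)$; (ABT1$_f$) $f(x,y)\leq f(y,x)$; (ABT1$_g$) $g(x,y)\leq g(y,x)$; (ABT2) $y\cdot f(x,z)\leq f(x\cdot f(x,y),z)$; (ABT3) $f(x,g(x,-y)\cdot y)\leq y$; (wMIA) if $x\neq0$ and $y\neq0$ then $g(x,y)\leq f(x,y)$. On the set of ultrafilters of $A$ define $Q_f(\mathcal U_1,\mathcal U_2,\mathcal U_3)\iff f[\mathcal U_1\times\mathcal U_3]\subseteq\mathcal U_2$ and $S_g(\mathcal U_1,\mathcal U_2,\mathcal U_3)\iff g[\mathcal U_1\times\mathcal U_3]\cap\mathcal U_2\neq\emptyset$. A PS-algebra is a MIA (mixed algebra) if $Q_f=S_g$. *)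

(* A Boolean algebra is a complemented distributive lattice
   with top and bottom: MathComp's ctbDistrLatticeType. *)
From mathcomp Require Import all_boot all_order.
Import Order.Theory.
Local Open Scope order_scope.

Section BA.
Context {d : Order.disp_t} {A : ctbDistrLatticeType d}.

Definition PS_algebra (f g : A -> A -> A) : Prop :=
  (forall x y, x = \bot \/ y = \bot -> f x y = \bot) /\
  (forall x x' y, f (x `|` x') y = f x y `|` f x' y) /\
  (forall x y y', f x (y `|` y') = f x y `|` f x y') /\
  (forall x y, x = \bot \/ y = \bot -> g x y = \top) /\
  (forall x x' y, g (x `|` x') y = g x y `&` g x' y) /\
  (forall x y y', g x (y `|` y') = g x y `&` g x y').

Definition betweenness_algebra (f g : A -> A -> A) : Prop :=
  PS_algebra f g /\
  (forall x, x <= f x x) /\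
  (forall x y, f x y <= f y x) /\
  (forall x y, g x y <= g y x) /\
  (forall x y z, y `&` f x z <= f (x `&` f x y) z) /\
  (forall x y, f x (g x (~` y) `&` y) <= y) /\
  (forall x y, x != \bot -> y != \bot -> g x y <= f x y).

Definition ultrafilter (U : A -> Prop) : Prop :=
  [/\ (forall x y, U x -> x <= y -> U y),
      (forall x y, U x -> U y -> U (x `&` y)),
      ~ U \bot
    & (forall x, U x \/ U (~` x))].

Definition Q_rel (f : A -> A -> A) (U1 U2 U3 : A -> Prop) : Prop :=
  forall a b, U1 a -> U3 b -> U2 (f a b).

Definition S_rel (g : A -> A -> A) (U1 U2 U3 : A -> Prop) : Prop :=
  exists a b, [/\ U1 a, U3 b & U2 (g a b)].

Definition is_MIA (f g : A -> A -> A) : Prop :=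
  forall U1 U2 U3, ultrafilter U1 -> ultrafilter U2 -> ultrafilter U3 ->
    (Q_rel f U1 U2 U3 <-> S_rel g U1 U2 U3).

End BA.

Definition infinite_type (T : eqType) : Prop :=
  forall s : seq T, exists x : T, x \notin s.

(* Q_f(U,U,U) holds for every ultrafilter U, by ABT0 and monotonicity of f.
   In a MIA, S_g(U,U,U) then yields some e in U with e <= g(e,e), and ABT3 and
   wMIA force any such nonzero e to be an atom: for 0 < p <= e with q = e - p
   nonzero, p <= g(p,q) <= f(p,q) <= -p. So U is principal. But an infinite
   Boolean algebra carries an ultrafilter containing no atom, namely any
   ultrafilter extending the Frechet filter of elements whose complement is a
   finite join of atoms (proper because only finitely many elements lie below a
   finite join of atoms). *)
From mathcomp Require Import all_boot all_order.
From mathcomp Require Import boolp classical_sets.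
Import Order.Theory.
Local Open Scope classical_set_scope.
Local Open Scope order_scope.

Section UltrafilterExtension.
Context {d : Order.disp_t} {A : ctbDistrLatticeType d}.
Implicit Types (F M U : A -> Prop) (x y : A).

Definition proper_filter F : Prop :=
  [/\ F \top,
      (forall x y, F x -> x <= y -> F y),
      (forall x y, F x -> F y -> F (x `&` y))
    & ~ F \bot].

Definition filter_adjoin F x : A -> Prop :=
  fun y => exists2 u, F u & u `&` x <= y.

Lemma proper_filter_adjoin F x :
  proper_filter F -> ~ F (~` x) -> proper_filter (filter_adjoin F x).
Proof.
move=> [Ftop Fup Fmeet _] Fnx; split.
- by exists \top; rewrite ?lex1.
- by move=> y z [u Fu uy] yz; exists u => //; apply: le_trans yz.
- move=> y z [u Fu uy] [v Fv vz]; exists (u `&` v); first exact: Fmeet.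
  by rewrite lexI (le_trans _ uy) ?(le_trans _ vz) ?leI2 ?leIl ?leIr.
- move=> [u Fu]; rewrite lex0 disj_leC => ux.
  by apply: Fnx; apply: Fup ux.
Qed.

Lemma maximal_proper_filter_ultra F M :
  proper_filter M -> F `<=` M ->
  (forall B, M `<` B -> ~ (F `<=` B /\ proper_filter B)) ->
  ultrafilter M.
Proof.
move=> Mfilter FM Mmax; have [Mtop Mup Mmeet Mbot] := Mfilter; split=> // x.
have [Mx|Mx] := pselect (M x); first by left.
have [Mnx|Mnx] := pselect (M (~` x)); first by right.
exfalso; apply: (Mmax (filter_adjoin M x)).
- split; first by move=> y My; exists y; rewrite ?leIl.
  by move=> Madj; apply: Mx; apply: Madj; exists \top; rewrite ?meet1x.
- split; last exact: proper_filter_adjoin.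
  by move=> y /FM My; exists y; rewrite ?leIl.
Qed.

Lemma proper_filter_bigcup (C : set (A -> Prop)) X0 :
  C X0 -> proper_filter X0 -> (forall X x, C X -> X x -> proper_filter X) ->
  total_on C subset -> proper_filter (\bigcup_(X in C) X).
Proof.
move=> CX0 [X0top _ _ _] Cfilter Ctot; split.
- by exists X0.
- move=> x y [X CX Xx] xy; exists X => //.
  by case: (Cfilter _ _ CX Xx) => _ Xup _ _; apply: Xup xy.
- move=> x y [X CX Xx] [Y CY Yy].
  have [XY|YX] := Ctot _ _ CX CY.
    exists Y => //; case: (Cfilter _ _ CY Yy) => _ _ Ymeet _.
    by apply: Ymeet => //; apply: XY.
  exists X => //; case: (Cfilter _ _ CX Xx) => _ _ Xmeet _.
  by apply: Xmeet => //; apply: YX.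
- by move=> [X CX Xbot]; case: (Cfilter _ _ CX Xbot).
Qed.

Lemma ultrafilter_extension F :
  proper_filter F -> exists U, ultrafilter U /\ F `<=` U.
Proof.
move=> Ffilter.
(* [set0] is admitted so that the empty chain has an upper bound. *)
pose P (X : A -> Prop) := X = set0 \/ F `<=` X /\ proper_filter X.
have extP X x : P X -> X x -> F `<=` X /\ proper_filter X.
  by case=> [-> //|].
have [M [[M0|[FM Mfilter]] Mmax]] :
    exists M, P M /\ forall B, M `<` B -> ~ P B.
- apply: Zorn_bigcup => C CP Ctot.
  have [[X0 CX0 [x0 X0x0]]|Cempty] := pselect (exists2 X, C X & X !=set0).
    have [FX0 X0filter] := extP _ _ (CP _ CX0) X0x0.
    right; split; first exact: subset_trans FX0 (bigcup_sup CX0).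
    apply: proper_filter_bigcup CX0 X0filter _ Ctot.
    by move=> X x CX Xx; case: (extP _ _ (CP _ CX) Xx).
  left; rewrite -subset0 => x [X CX Xx].
  by apply: Cempty; exists X => //; exists x.
- have [Ftop _ _ _] := Ffilter.
  exfalso; apply: (Mmax F); last by right; split.
  by rewrite M0; split; [exact: sub0set | move=> /(_ _ Ftop)].
- exists M; split=> //; apply: maximal_proper_filter_ultra Mfilter FM _.
  by move=> B MB BF; apply: (Mmax B MB); right.
Qed.

End UltrafilterExtension.

Section AtomlessUltrafilter.
Context {d : Order.disp_t} {A : ctbDistrLatticeType d}.

Definition atom (a : A) : Prop :=
  a != \bot /\ forall y, y <= a -> y = \bot \/ y = a.

Definition atoms (s : seq A) : Prop := forall a, a \in s -> atom a.

Lemma finite_below_join_atoms (s : seq A) : atoms s ->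
  exists L : seq A, forall x, x <= \join_(a <- s) a -> x \in L.
Proof.
elim: s => [|a s IHs] s_atoms.
  by exists [:: \bot] => x; rewrite big_nil lex0 inE.
have [|L HL] := IHs; first by move=> b bs; apply: s_atoms; rewrite inE bs orbT.
have [_ a_min] := s_atoms a (mem_head _ _).
exists (L ++ map (Order.join a) L) => x; rewrite big_cons => xle.
have xE : x = (x `&` a) `|` (x `&` \join_(b <- s) b) by rewrite -meetUr meet_l.
have xsL : x `&` \join_(b <- s) b \in L by apply: HL; exact: leIr.
rewrite mem_cat; have [xa0|xaa] := a_min (x `&` a) (leIr _ _).
  by rewrite xE xa0 join0x xsL.
by rewrite xE xaa map_f ?orbT.
Qed.

Definition frechet_filter (y : A) : Prop :=
  exists2 s, atoms s & ~` y <= \join_(a <- s) a.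

Lemma proper_frechet_filter : infinite_type A -> proper_filter frechet_filter.
Proof.
move=> Ainf; split.
- by exists [::] => //; rewrite compl1 le0x.
- move=> x y [s s_atoms xs] xy; exists s => //.
  by apply: le_trans xs; rewrite leC.
- move=> x y [s s_atoms xs] [t t_atoms yt]; exists (s ++ t).
    by move=> a; rewrite mem_cat => /orP[]; [apply: s_atoms | apply: t_atoms].
  by rewrite big_cat complI leU2.
- move=> [s s_atoms]; rewrite compl0 => top_le.
  have [L HL] := finite_below_join_atoms _ s_atoms.
  have [x xL] := Ainf L.
  by move: xL; rewrite HL // (le_trans _ top_le) ?lex1.
Qed.

Lemma atomless_ultrafilter : infinite_type A ->
  exists U : A -> Prop, ultrafilter U /\ forall a, atom a -> ~ U a.
Proof.
move=> Ainf.
have [U [[Uup Umeet Ubot Uult] frechetU]] :=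
  ultrafilter_extension _ (proper_frechet_filter Ainf).
exists U; split=> // a a_atom Ua; apply: Ubot.
have Una : U (~` a).
  apply: frechetU; exists [:: a]; last by rewrite big_seq1 complK.
  by move=> b /[1!inE] /eqP ->.
by rewrite -(meetxC a); apply: Umeet.
Qed.

End AtomlessUltrafilter.

Section AdditiveMaps.
Context {d : Order.disp_t} {L : latticeType d}.
Variable h : L -> L -> L.

Lemma le_additive2 :
    (forall x x' y, h (x `|` x') y = h x y `|` h x' y) ->
    (forall x y y', h x (y `|` y') = h x y `|` h x y') ->
  forall x x' y y', x <= x' -> y <= y' -> h x y <= h x' y'.
Proof.
move=> hDl hDr x x' y y' /join_idPr <- /join_idPr <-.
by rewrite hDl hDr -joinA leUl.
Qed.

Lemma ge_coadditive2 :
    (forall x x' y, h (x `|` x') y = h x y `&` h x' y) ->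
    (forall x y y', h x (y `|` y') = h x y `&` h x y') ->
  forall x x' y y', x <= x' -> y <= y' -> h x' y' <= h x y.
Proof.
move=> hDl hDr x x' y y' /join_idPr <- /join_idPr <-.
by rewrite hDl hDr -meetA leIl.
Qed.

End AdditiveMaps.

Section PSAlgebra.
Context {d : Order.disp_t} {A : ctbDistrLatticeType d}.
Context {f g : A -> A -> A}.
Hypothesis fgPS : PS_algebra f g.

Lemma PS_le_f x x' y y' : x <= x' -> y <= y' -> f x y <= f x' y'.
Proof. by case: fgPS => _ [fDl [fDr _]]; apply: le_additive2. Qed.

Lemma PS_ge_g x x' y y' : x <= x' -> y <= y' -> g x' y' <= g x y.
Proof. by case: fgPS => _ [_ [_ [_ [gDl gDr]]]]; apply: ge_coadditive2. Qed.

Lemma Q_rel_diag U :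
  (forall x, x <= f x x) -> ultrafilter U -> Q_rel f U U U.
Proof.
move=> f_diag [Uup Umeet _ _] a b Ua Ub.
apply: (Uup (a `&` b)); first exact: Umeet.
by apply: le_trans (f_diag _) _; apply: PS_le_f; rewrite ?leIl ?leIr.
Qed.

Lemma S_rel_diag_le_g U :
  ultrafilter U -> S_rel g U U U -> exists2 e, U e & e <= g e e.
Proof.
move=> [Uup Umeet _ _] [a [b [Ua Ub Ugab]]].
have Uab : U (a `&` b) by apply: Umeet.
have Ug : U (g (a `&` b) (a `&` b)).
  by apply: Uup Ugab _; apply: PS_ge_g; rewrite ?leIl ?leIr.
exists (a `&` b `&` g (a `&` b) (a `&` b)); first exact: Umeet.
by apply: le_trans (leIr _ _) _; apply: PS_ge_g; exact: leIl.
Qed.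

Lemma atom_le_g_diag e :
    (forall x y, f x (g x (~` y) `&` y) <= y) ->
    (forall x y, x != \bot -> y != \bot -> g x y <= f x y) ->
  e != \bot -> e <= g e e -> atom e.
Proof.
move=> abt3 wmia e0 e_le_g; split=> // p pe.
have [->|p0] := eqVneq p \bot; [by left | right].
have [q0|q0] := eqVneq (e `&` ~` p) \bot.
  by apply/eqP; rewrite eq_le pe /= -[p]complK -disj_leC q0.
set q := e `&` ~` p in q0.
have q_le_g : q <= g p p.
  by rewrite (le_trans (leIl _ _)) // (le_trans e_le_g) ?PS_ge_g.
have p_le_fpq : p <= f p q.
  apply: le_trans (wmia _ _ p0 q0); apply: (le_trans pe (le_trans e_le_g _)).
  exact: PS_ge_g pe (leIl _ _).
have fpq_le_np : f p q <= ~` p.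
  by rewrite (le_trans _ (abt3 p (~` p))) // PS_le_f // complK lexI q_le_g leIr.
have := le_trans p_le_fpq fpq_le_np.
by rewrite -disj_leC meetxx (negbTE p0).
Qed.

End PSAlgebra.

Theorem theorem49 (d : Order.disp_t) (A : ctbDistrLatticeType d)
    (f g : A -> A -> A) :
  (\bot : A) != \top ->
  infinite_type A ->
  betweenness_algebra f g ->
  ~ is_MIA f g.
Proof.
(* Nontriviality of A is already implied by its being infinite. *)
move=> _ Ainf [fgPS [abt0 [_ [_ [_ [abt3 wmia]]]]]] fgMIA.
have [U [Uultra U_atomless]] := atomless_ultrafilter Ainf.
have [e Ue e_le_g] : exists2 e, U e & e <= g e e.
  apply: (S_rel_diag_le_g fgPS _ Uultra).
  apply/(fgMIA _ _ _ Uultra Uultra Uultra).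
  exact: Q_rel_diag fgPS _ abt0 Uultra.
apply: (U_atomless e) => //; apply: (atom_le_g_diag fgPS e abt3 wmia _ e_le_g).
by apply: contraPneq Ue => ->; case: Uultra.
Qed.
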